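(* Let $\mathcal D\subset\mathbb R^d$ be a bounded domain, $p>0$, and $\rho:\mathcal D\times\Omega\to[0,\infty)$ a non-negative (error density) random field. Fix $C\in(0,1)$, $\mathrm{TOL}_0>0$, $\theta\in(0,1)$, $C_\xi>0$, set $\mathrm{TOL}_\ell=C^\ell\mathrm{TOL}_0$, and assume the work and bias models described in the context. Assume the sampling error control satisfies either (i) (fully adaptive case) $\|\rho\|_{L^{d/(p+d)}_{\mathbb P}(\mathcal D\times\Omega)}<\infty$ and the level-$\ell$ mesh is $h_\ell(x;\omega)=\mathrm{TOL}_\ell^{1/p}\big(\int_{\mathcal D}\mathbb E[\rho^{\frac d{p+d}}]\big)^{-1/p}\rho(x;\omega)^{-\frac1{p+d}}$, so that $\int_{\mathcal D}\rho h_\ell^p\,dx=\mathrm{TOL}_\ell\int_{\mathcal D}\rho^{\frac d{p+d}}dx\big/\int_{\mathcal D}\mathbb E[\rho^{\frac d{p+d}}]$ for each sample; or (ii) (adaptive selection of uniform meshes) $\big\|\|\rho\|_{L^1(\mathcal D)}\big\|_{L^{d/(p+d)}_{\mathbb P}(\Omega)}<\infty$ and the level-$\ell$ mesh is the constant $h_\ell(\omega)=\mathrm{TOL}_\ell^{1/p}\big(\int_{\mathcal D}\rho(x;\omega)dx\big)^{-\frac1{p+d}}\big/\mathbb E\big[(\int_{\mathcal D}\rho)^{\frac d{p+d}}\big]^{1/p}$, so that $h_\ell^p\int_{\mathcal D}\rho\,dx=\mathrm{TOL}_\ell(\int_{\mathcal D}\rho)^{\frac d{p+d}}/\mathbb E[(\int_{\mathcal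 D}\rho)^{\frac d{p+d}}]$ for each sample. Then the MLMC work $W_{\mathrm{MLMC}}(\mathrm{TOL})$ defined in the context, with real-valued $L$ implied by the bias constraint, satisfies, as $\mathrm{TOL}\to0$ (with $C,\mathrm{TOL}_0,\theta,C_\xi$ fixed), $$W_{\mathrm{MLMC}}\simeq\begin{cases}K\,\mathrm{TOL}^{-2},& d<2p,\\ K\,\mathrm{TOL}^{-2}(\log\mathrm{TOL}^{-1})^2,& d=2p,\\ K\,\mathrm{TOL}^{-d/p},& d>2p,\end{cases}$$ (i.e. the ratio of the two sides tends to $1$), where $K=K_3K_4K_5$ with $K_3=\mathbb E[K_2]\mathrm{Var}[K_1]$, which equals $\|\rho\|^{d/p}_{L^{d/(p+d)}_{\mathbb P}(\mathcal D\times\Omega)}\big(c_V(\|\rho\|_{L^{d/(p+d)}(\mathcal D)}^{d/(p+d)})\big)^2$ in case (i) and $|\mathcal D|\,\big\|\|\rho\|_{L^1(\mathcal D)}\big\|^{d/p}_{L^{d/(p+d)}_{\mathbb P}(\Omega)}\big(c_V(\|\rho\|_{L^1(\mathcal D)}^{d/(p+d)})\big)^2$ in case (ii); $$K_4=\begin{cases}\mathrm{TOL}_0^{-d/p}\left(\sqrt{\frac{V_0}{\mathrm{Var}[K_1]}}\frac{1}{(C^{-1}-1)\sqrt{1+C^{d/p}}}+\mathrm{TOL}_0\frac{C^{1-\frac d{2p}}}{1-C^{1-\frac d{2p}}}\right)^2,& d<2p,\\ (\log C)^{-2},& d=2p,\\ (1-\theta)^{2-\frac dp}\big(1-C^{\frac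 d{2p}-1}\big)^{-2},& d>2p;\end{cases}$$ and $K_5=\left(\frac{C_\xi}{\theta}\right)^2(C^{-1}-1)^2(1+C^{d/p})$.
   Context: Norms: for $q=\frac d{p+d}\in(0,1)$, $\|g\|_{L^q_{\mathbb P}(\mathcal D\times\Omega)}=\big(\int_{\mathcal D}\mathbb E[|g|^q]\big)^{1/q}$ (a quasi-norm), similarly on $\mathcal D$ or $\Omega$ alone; $|\mathcal D|=\int_{\mathcal D}1\,dx$; $c_V(Y)=\sqrt{\mathrm{Var}[Y]}/\mathbb E[Y]$ is the coefficient of variation. In both cases the meshes have the form $h_\ell(x;\omega)=\mathrm{TOL}_\ell^{1/p}f(x;\omega)$ with $f$ independent of $\ell$; define $K_1(\omega)=\int_{\mathcal D}\rho f^p\,dx$ and $K_2(\omega)=\int_{\mathcal D}f^{-d}\,dx$. Work model: the expected work of one sample computed with mesh size function $h$ is $\int_{\mathcal D}\mathbb E[h^{-d}]$. Bias model: the error of the output computed on mesh $h$ is $\int_{\mathcal D}\rho h^p$, so level differences are modeled by $Q_\ell-Q_{\ell-1}\simeq\int_{\mathcal D}\rho(h_{\ell-1}^p-h_\ell^p)dx$. Accordingly the level variances and works are $V_0>0$ a constant (the variance of the level-$0$ output), $W_0=\int_{\mathcal D}\mathbb E[h_0^{-d}]=\mathrm{TOL}_0^{-d/p}\mathbb E[K_2]$, and for $\ell\ge1$: $V_\ell=\mathrm{TOL}_\ell^2(C^{-1}-1)^2\mathrm{Var}[K_1]$, $W_\ell=\int_{\mathcal D}\mathbb E[h_\ell^{-d}]+\int_{\mathcal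 D}\mathbb E[h_{\ell-1}^{-d}]=\mathrm{TOL}_\ell^{-d/p}(1+C^{d/p})\mathbb E[K_2]$. MLMC work: $W_{\mathrm{MLMC}}=\sum_{\ell=0}^L M_\ell W_\ell$ with real (non-rounded) optimal sample sizes $M_\ell=(C_\xi/(\theta\mathrm{TOL}))^2\sqrt{V_\ell/W_\ell}\sum_{m=0}^L\sqrt{W_mV_m}$, so that $W_{\mathrm{MLMC}}=(C_\xi/(\theta\mathrm{TOL}))^2\big(\sum_{\ell=0}^L\sqrt{W_\ell V_\ell}\big)^2$. The number of levels $L\in\mathbb R^+$ is implied by the bias constraint $\mathrm{TOL}_L=C^L\mathrm{TOL}_0=(1-\theta)\mathrm{TOL}$, i.e. $L=\log_C\big((1-\theta)\mathrm{TOL}/\mathrm{TOL}_0\big)$ (assuming $\mathrm{TOL}_0>(1-\theta)\mathrm{TOL}$); for non-integer $L$ the geometric sum $\sum_{\ell=1}^L C^{(1-\frac d{2p})\ell}$ is interpreted as $C^{1-\frac d{2p}}\frac{1-C^{(1-\frac d{2p})L}}{1-C^{1-\frac d{2p}}}$ when $d\ne2p$ and as $L$ when $d=2p$. *)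

From HB Require Import structures.
From mathcomp Require Import all_boot all_order all_algebra.
From mathcomp Require Import all_classical all_reals all_analysis.
Set Implicit Arguments. Unset Strict Implicit. Unset Printing Implicit Defensive.
Import Order.TTheory GRing.Theory Num.Theory.
Import numFieldNormedType.Exports.
Local Open Scope classical_set_scope.
Local Open Scope ring_scope.

Section Prob.
Context {R : realType} {dT : measure_display} {T : measurableType dT}.
Variable P : probability T R.

Definition Ee (Y : T -> \bar R) : \bar R := (\int[P]_w Y w)%E.
Definition Vare (Y : T -> \bar R) : \bar R :=
  (\int[P]_w ((Y w - Ee Y) ^+ 2))%E.
Definition coef_var (Y : T -> \bar R) : R :=
  Num.sqrt (fine (Vare Y)) / fine (Ee Y).
End Prob.

Section Field.
Context {R : realType} {dX : measure_display} {X : measurableType dX}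
        {dT : measure_display} {T : measurableType dT}.
Variables (mu : {measure set X -> \bar R}) (D : set X) (P : probability T R).

Definition qexp (d : nat) (p : R) : R := d%:R / (p + d%:R).

Definition LqP_norm (g : X -> T -> R) (q : R) : \bar R :=
  poweR (\int[mu]_(x in D) \int[P]_w ((`|g x w| `^ q)%:E))%E q^-1.

Definition LqD_norm (g : X -> T -> R) (q : R) (w : T) : \bar R :=
  poweR (\int[mu]_(x in D) ((`|g x w| `^ q)%:E))%E q^-1.

Definition L1D_norm (g : X -> T -> R) (w : T) : \bar R :=
  (\int[mu]_(x in D) (`|g x w|%:E))%E.

Definition LqO_norm (Y : T -> \bar R) (q : R) : \bar R :=
  poweR (\int[P]_w poweR (`|Y w|)%E q)%E q^-1.

(* Case (i), fully adaptive meshes: h_l = TOL_l^(1/p) * f_full, with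
   f_full(x;w) = (int_D E[rho^q])^(-1/p) * rho(x;w)^(-1/(p+d)).        *)
Definition f_full (rho : X -> T -> R) (d : nat) (p : R) (x : X) (w : T) : R :=
  (fine (\int[mu]_(x in D) \int[P]_w ((rho x w `^ qexp d p)%:E))%E) `^ (- p^-1)
  * rho x w `^ (- (p + d%:R)^-1).

(* Case (ii), adaptively chosen uniform meshes: h_l = TOL_l^(1/p) * f_unif,
   f_unif(w) = (int_D rho(.;w))^(-1/(p+d)) / E[(int_D rho)^q]^(1/p).  *)
Definition f_unif (rho : X -> T -> R) (d : nat) (p : R) (x : X) (w : T) : R :=
  (fine (\int[mu]_(x in D) (rho x w)%:E)%E) `^ (- (p + d%:R)^-1)
  / (fine (\int[P]_w poweR (\int[mu]_(x in D) (rho x w)%:E) (qexp d p))%E)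
      `^ (p^-1).

Definition mesh (p C TOL0 : R) (l : nat) (f : X -> T -> R) (x : X) (w : T) : R :=
  (C ^+ l * TOL0) `^ (p^-1) * f x w.

Definition K1 (rho f : X -> T -> R) (p : R) (w : T) : \bar R :=
  (\int[mu]_(x in D) ((rho x w * f x w `^ p)%:E))%E.
Definition K2 (f : X -> T -> R) (d : nat) (w : T) : \bar R :=
  (\int[mu]_(x in D) ((f x w `^ (- d%:R))%:E))%E.
End Field.

(*  E2 = E[K_2], VK1 = Var[K_1], V0 = Vare of level-0 output.      *)
Section MLMC.
Context {R : realType}.
Variables (d : nat) (p C TOL0 theta Cxi V0 E2 VK1 : R).

Definition dp : R := d%:R / p.

Definition TOLl (l : nat) : R := C ^+ l * TOL0.
Definition Vlev (l : nat) : R :=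
  if l == 0%N then V0 else TOLl l ^+ 2 * (C^-1 - 1) ^+ 2 * VK1.
Definition Wlev (l : nat) : R :=
  if l == 0%N then TOL0 `^ (- dp) * E2
  else TOLl l `^ (- dp) * (1 + C `^ dp) * E2.

(* real number of levels implied by TOL_L = (1 - theta) TOL *)
Definition Lreal (TOL : R) : R := ln ((1 - theta) * TOL / TOL0) / ln C.

Definition sexp : R := 1 - d%:R / (2 * p).

(* sum_{l=1}^L C^(s l), extended to real L as in the context *)
Definition geom_sum (L : R) : R :=
  if d%:R == 2 * p then L
  else C `^ sexp * (1 - C `^ (sexp * L)) / (1 - C `^ sexp).

(* sum_{l=1}^L sqrt(W_l V_l): since sqrt(W_l V_l) = sqrt(W_1 V_1) C^(s(l-1)),
   this is sqrt(W_1 V_1) C^(-s) sum_{l=1}^L C^(s l).                   *)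
Definition sum_sqrtWV (L : R) : R :=
  Num.sqrt (Wlev 1 * Vlev 1) * C `^ (- sexp) * geom_sum L.

Definition W_MLMC (TOL : R) : R :=
  (Cxi / (theta * TOL)) ^+ 2
  * (Num.sqrt (Wlev 0 * Vlev 0) + sum_sqrtWV (Lreal TOL)) ^+ 2.

Definition K3 : R := E2 * VK1.
Definition K4 : R :=
  if d%:R < 2 * p then
    TOL0 `^ (- dp) *
    (Num.sqrt (V0 / VK1) / ((C^-1 - 1) * Num.sqrt (1 + C `^ dp))
     + TOL0 * C `^ sexp / (1 - C `^ sexp)) ^+ 2
  else if d%:R == 2 * p then (ln C) ^- 2
  else (1 - theta) `^ (2 - dp) * (1 - C `^ (d%:R / (2 * p) - 1)) ^- 2.
Definition K5 : R := (Cxi / theta) ^+ 2 * (C^-1 - 1) ^+ 2 * (1 + C `^ dp).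
Definition Kconst : R := K3 * K4 * K5.

Definition rate (TOL : R) : R :=
  if d%:R < 2 * p then TOL ^- 2
  else if d%:R == 2 * p then TOL ^- 2 * (ln TOL^-1) ^+ 2
  else TOL `^ (- dp).

Definition mlmc_asymptotics : Prop :=
  (fun TOL => W_MLMC TOL / (Kconst * rate TOL)) @ 0^'+ --> (1 : R).
End MLMC.

(* Let s = 1 - d/(2p).  The terms sqrt(W_l V_l), l >= 1, form a geometric sequence of ratio
   C^s, and C^(s L(TOL)) is a constant multiple of TOL^s; hence
   W_MLMC(TOL) = (C_xi/(theta TOL))^2 (a + b G(TOL))^2 with G affine in TOL^s when d <> 2p and
   affine in ln TOL when d = 2p.  Dividing by the dominant term, W_MLMC / (K rate) takes the
   form ((al + be phi(TOL)) / al)^2 where phi is TOL^s, TOL^(-s) or 1/ln TOL, so it tends to 1.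
   For K_3, both mesh choices make K_1 = Y / E[Y] and K_2 = m E[Y]^(d/p) Y for one random
   variable Y (int_D rho^q in case (i), almost surely (int_D rho)^q in case (ii); m = 1 resp.
   |D|).  Thus E[K_2] Var[K_1] = m E[Y]^(d/p - 1) Var[Y], and as the norm in the statement
   raised to d/p equals E[Y]^(1 + d/p), this is m ||.||^(d/p) c_V(Y)^2. *)

From HB Require Import structures.
From mathcomp Require Import all_boot all_order all_algebra.
From mathcomp Require Import all_classical all_reals all_analysis.
From mathcomp Require Import measurable_realfun ring.
Import Order.TTheory GRing.Theory Num.Theory.
Import numFieldNormedType.Exports.
Local Open Scope classical_set_scope.
Local Open Scope ring_scope.
Set Implicit Arguments. Unset Strict Implicit. Unset Printing Implicit Defensive.

Lemma sqr_affine_ratio_cvg1 (R : numFieldType) (U : Type) (F : set_system U)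
    (FF : Filter F) (f phi : U -> R) (al be : R) :
  al != 0 -> phi @ F --> (0 : R) ->
  (\forall t \near F, f t = (al + be * phi t) ^+ 2 / al ^+ 2) ->
  f @ F --> (1 : R).
Proof.
move=> al0 phi0 fE.
have lin : (fun t => al + be * phi t) @ F --> al + be * 0.
  by apply: cvgD; [|apply: cvgM]; [exact: cvg_cst|exact: cvg_cst|].
have lim : (fun t => (al + be * phi t) * (al + be * phi t) / al ^+ 2) @ F -->
    (al + be * 0) * (al + be * 0) / al ^+ 2.
  by apply: cvgM; [exact: cvgM|exact: cvg_cst].
rewrite mulr0 addr0 -expr2 divff ?sqrf_eq0 // in lim.
by apply: cvg_trans lim; apply: near_eq_cvg; apply: filterS fE => t ->; rewrite expr2.
Qed.

Section MLMCAsymptotics.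
Variables (R : realType) (d : nat) (p C TOL0 theta Cxi V0 E2 VK1 : R).
Hypotheses (p_gt0 : 0 < p) (C_gt0 : 0 < C) (C_lt1 : C < 1) (TOL0_gt0 : 0 < TOL0)
  (theta_gt0 : 0 < theta) (theta_lt1 : theta < 1) (Cxi_gt0 : 0 < Cxi)
  (V0_gt0 : 0 < V0) (E2_gt0 : 0 < E2) (VK1_gt0 : 0 < VK1).

Let s := sexp d p.
Let c := C^-1 - 1.
Let w := 1 + C `^ dp d p.
Let a := Num.sqrt (Wlev d p C TOL0 E2 0 * Vlev C TOL0 V0 VK1 0).
Let b := TOL0 `^ s * c * Num.sqrt (w * E2 * VK1).
Let c1 := ((1 - theta) / TOL0) `^ s.
Let k := C `^ s / (1 - C `^ s).

Let c_gt0 : 0 < c. Proof. by rewrite subr_gt0 invf_gt1. Qed.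
Let w_gt0 : 0 < w. Proof. by rewrite ltr_wpDr ?powR_ge0. Qed.
Let lnC_lt0 : ln C < 0. Proof. by rewrite ln_lt0 // C_gt0 C_lt1. Qed.

Let a_gt0 : 0 < a.
Proof. by rewrite /a /Wlev /Vlev /= sqrtr_gt0 !mulr_gt0 ?powR_gt0. Qed.

Let b_gt0 : 0 < b.
Proof. by rewrite /b !mulr_gt0 ?powR_gt0 ?sqrtr_gt0 ?mulr_gt0. Qed.

Lemma powR_sexp_sqrt (x : R) : 0 < x -> Num.sqrt (x `^ (- dp d p)) * x = x `^ s.
Proof.
move=> x_gt0; rewrite -powR12_sqrt ?powR_ge0// -powRrM.
rewrite -{2}(powRr1 (ltW x_gt0)) -powRD; last by rewrite (gt_eqF x_gt0) implybT.
congr (x `^ _); rewrite /s /dp /sexp; field; exact: lt0r_neq0.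
Qed.

Lemma W_MLMC_E t : W_MLMC d p C TOL0 theta Cxi V0 E2 VK1 t =
  (Cxi / (theta * t)) ^+ 2 * (a + b * geom_sum d p C (Lreal C TOL0 theta t)) ^+ 2.
Proof.
rewrite /W_MLMC /sum_sqrtWV; congr (_ * (_ + _) ^+ 2); congr (_ * _).
rewrite /Wlev /Vlev /= /TOLl expr1.
have CT_gt0 : 0 < C * TOL0 by rewrite mulr_gt0.
have -> : (C * TOL0) `^ (- dp d p) * (1 + C `^ dp d p) * E2 *
    ((C * TOL0) ^+ 2 * (C^-1 - 1) ^+ 2 * VK1) =
    ((C * TOL0) `^ s * c) ^+ 2 * (w * E2 * VK1).
  rewrite -powR_sexp_sqrt // !exprMn sqr_sqrtr ?powR_ge0 // /c /w; ring.
rewrite sqrtrM ?sqr_ge0 // sqrtr_sqr ger0_norm ?mulr_ge0 ?powR_ge0 ?(ltW c_gt0) //.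
rewrite powRM ?(ltW C_gt0) ?(ltW TOL0_gt0) // powRN -/s.
by rewrite /b; field; rewrite gt_eqF ?powR_gt0.
Qed.

Lemma powR_sexp_Lreal t : 0 < t -> C `^ (s * Lreal C TOL0 theta t) = c1 * t `^ s.
Proof.
move=> t_gt0.
have x_gt0 : 0 < (1 - theta) * t / TOL0 by rewrite divr_gt0 // mulr_gt0 // subr_gt0.
rewrite {1}/powR (gt_eqF C_gt0) /Lreal -mulrA divfK ?lt_eqF //.
have -> : expR (s * ln ((1 - theta) * t / TOL0)) = ((1 - theta) * t / TOL0) `^ s.
  by rewrite /powR gt_eqF.
by rewrite mulrAC powRM ?divr_ge0 ?ltW ?subr_gt0.
Qed.

Lemma sexp_gt0 : d%:R < 2 * p -> 0 < s.
Proof. by move=> lt2p; rewrite subr_gt0 ltr_pdivrMr ?mulr_gt0 // mul1r. Qed.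

Lemma sexp_lt0 : 2 * p < d%:R -> s < 0.
Proof. by move=> gt2p; rewrite subr_lt0 ltr_pdivlMr ?mulr_gt0 // mul1r. Qed.

Lemma powR_sexp_lt1 : d%:R < 2 * p -> C `^ s < 1.
Proof. by move=> /sexp_gt0 ?; rewrite /powR gt_eqF // expR_lt1 pmulr_rlt0. Qed.

Lemma powR_sexp_gt1 : 2 * p < d%:R -> 1 < C `^ s.
Proof. by move=> /sexp_lt0 ?; rewrite /powR gt_eqF // expR_gt1 nmulr_rgt0. Qed.

Lemma geom_sum_Lreal t : 0 < t -> d%:R != 2 * p ->
  geom_sum d p C (Lreal C TOL0 theta t) = k * (1 - c1 * t `^ s).
Proof. by move=> t_gt0 /negbTE d_neq; rewrite /geom_sum d_neq powR_sexp_Lreal // mulrAC. Qed.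

Lemma Kconst_lt : d%:R < 2 * p ->
  Kconst d p C TOL0 theta Cxi V0 E2 VK1 = (Cxi / theta) ^+ 2 * (a + b * k) ^+ 2.
Proof.
move=> lt2p; rewrite /Kconst /K3 /K4 /K5 lt2p /a /b /k /Wlev /Vlev /= -/s -/c -/w.
rewrite -(powR_sexp_sqrt TOL0_gt0) !sqrtrM ?mulr_ge0 ?powR_ge0 ?ltW // sqrtrV ?ltW //.
(* Write each radicand as the square of its root, so that [field] only sees the roots. *)
move: (sqr_sqrtr (ltW E2_gt0)); set sE := Num.sqrt E2 => <-.
have sV_gt0 : 0 < Num.sqrt VK1 by rewrite sqrtr_gt0.
have sw_gt0 : 0 < Num.sqrt w by rewrite sqrtr_gt0.
move: (sqr_sqrtr (ltW VK1_gt0)); set sV := Num.sqrt VK1 in sV_gt0 * => <-.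
move: (sqr_sqrtr (ltW w_gt0)); set sw := Num.sqrt w in sw_gt0 * => <-.
move: (sqr_sqrtr (powR_ge0 TOL0 (- dp d p))); set u := Num.sqrt _ => <-.
by field; rewrite !gt_eqF ?subr_gt0 ?invf_gt1 ?powR_sexp_lt1.
Qed.

Let c1E : c1 = (1 - theta) `^ s / TOL0 `^ s.
Proof.
rewrite /c1 powRM ?subr_ge0 ?invr_ge0 ?ltW //.
by rewrite -(powR_inv1 (ltW TOL0_gt0)) -powRrM mulN1r powRN.
Qed.

Let b_sqr : b ^+ 2 = (TOL0 `^ s * c) ^+ 2 * (w * E2 * VK1).
Proof. by rewrite /b exprMn sqr_sqrtr // !mulr_ge0 ?ltW. Qed.

Lemma Kconst_gt : 2 * p < d%:R ->
  Kconst d p C TOL0 theta Cxi V0 E2 VK1 = (Cxi / theta) ^+ 2 * (b * c1 * k) ^+ 2.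
Proof.
move=> gt2p; have Cs_gt1 := powR_sexp_gt1 gt2p.
have theta_pow : (1 - theta) `^ (2 - dp d p) = ((1 - theta) `^ s) ^+ 2.
  rewrite expr2 -powRD; last by rewrite subr_eq0 (gt_eqF theta_lt1) implybT.
  by congr (_ `^ _); rewrite /s /sexp /dp; field; rewrite gt_eqF.
have C_pow : C `^ (d%:R / (2 * p) - 1) = (C `^ s)^-1.
  by rewrite -powRN /s /sexp opprB.
rewrite /Kconst /K3 /K4 /K5.
have -> : (d%:R < 2 * p) = false by rewrite ltNge ltW.
rewrite gt_eqF // theta_pow C_pow.
rewrite [(b * c1 * k) ^+ 2]exprMn [(b * c1) ^+ 2]exprMn b_sqr c1E /k -/s -/c -/w.
by field; rewrite !subr_eq0 (lt_eqF Cs_gt1) (gt_eqF Cs_gt1) !gt_eqF ?powR_gt0.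
Qed.

Lemma Kconst_eq : d%:R = 2 * p ->
  Kconst d p C TOL0 theta Cxi V0 E2 VK1 = (Cxi / theta) ^+ 2 * (b / ln C) ^+ 2.
Proof.
move=> eq2p; have s0 : s = 0 by rewrite /s /sexp eq2p divff ?subrr // gt_eqF ?mulr_gt0.
rewrite /Kconst /K3 /K4 /K5 eq2p ltxx eqxx /= [(b / _) ^+ 2]exprMn b_sqr s0 powRr0 -/c -/w.
by field; rewrite (lt_eqF lnC_lt0) gt_eqF.
Qed.

Lemma mlmc_asymptotics_lt : d%:R < 2 * p ->
  mlmc_asymptotics d p C TOL0 theta Cxi V0 E2 VK1.
Proof.
move=> lt2p; have lead_gt0 : 0 < a + b * k.
  by rewrite addr_gt0 // mulr_gt0 // divr_gt0 ?powR_gt0 // subr_gt0 powR_sexp_lt1.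
apply: (@sqr_affine_ratio_cvg1 _ _ _ _ _ (fun t => t `^ s) (a + b * k) (- (b * k * c1))).
- by rewrite gt_eqF.
- exact/powR_cvg0/sexp_gt0.
near=> t; have t_gt0 : 0 < t by near: t; exact: nbhs_right_gt.
rewrite W_MLMC_E geom_sum_Lreal ?lt_eqF // Kconst_lt // /rate lt2p.
by field; rewrite !gt_eqF.
Unshelve. all: by end_near.
Qed.

Lemma mlmc_asymptotics_gt : 2 * p < d%:R ->
  mlmc_asymptotics d p C TOL0 theta Cxi V0 E2 VK1.
Proof.
move=> gt2p; have Cs_gt1 := powR_sexp_gt1 gt2p.
have k_neq0 : k != 0.
  by rewrite mulf_neq0 ?invr_eq0 ?subr_eq0 ?(lt_eqF Cs_gt1) ?gt_eqF ?powR_gt0.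
have c1_gt0 : 0 < c1 by rewrite powR_gt0 // divr_gt0 // subr_gt0.
apply: (@sqr_affine_ratio_cvg1 _ _ _ _ _ (fun t => t `^ (- s)) (- (b * c1 * k)) (a + b * k)).
- by rewrite oppr_eq0 mulf_neq0 // mulf_neq0 // gt_eqF.
- by apply: powR_cvg0; rewrite oppr_gt0 sexp_lt0.
near=> t; have t_gt0 : 0 < t by near: t; exact: nbhs_right_gt.
have rateE : t `^ (- dp d p) = (t `^ s) ^+ 2 / t ^+ 2.
  by rewrite -(powR_sexp_sqrt t_gt0) exprMn sqr_sqrtr ?powR_ge0 // mulfK // expf_neq0 ?gt_eqF.
rewrite W_MLMC_E geom_sum_Lreal ?gt_eqF // Kconst_gt // /rate.
have -> : (d%:R < 2 * p) = false by rewrite ltNge ltW.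
rewrite gt_eqF // rateE powRN.
have ts_gt0 : 0 < t `^ s by rewrite powR_gt0.
by field; rewrite k_neq0 !gt_eqF.
Unshelve. all: by end_near.
Qed.

Lemma mlmc_asymptotics_eq : d%:R = 2 * p ->
  mlmc_asymptotics d p C TOL0 theta Cxi V0 E2 VK1.
Proof.
move=> eq2p; have lnC_neq0 : ln C != 0 by rewrite lt_eqF.
have ln_lt0_near : \forall t \near 0^'+, ln t < 0 :> R.
  near=> t; apply: ln_lt0; apply/andP; split; near: t.
  - exact: nbhs_right_gt.
  - exact: nbhs_right_lt.
apply: (@sqr_affine_ratio_cvg1 _ _ _ _ _ (fun t => (ln t)^-1) (b / ln C)
  (a + b * ln ((1 - theta) / TOL0) / ln C)).
- by rewrite mulf_eq0 invr_eq0 negb_or lnC_neq0 gt_eqF.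
- exact: (ltr0_cvgV0 ln_lt0_near).2 (@lnNy R).
near=> t; have t_gt0 : 0 < t by near: t; exact: nbhs_right_gt.
have lnt_lt0 : ln t < 0 by near: t; exact: ln_lt0_near.
rewrite W_MLMC_E /geom_sum /Lreal /rate Kconst_eq // eq2p ltxx eqxx.
rewrite [(1 - theta) * t / TOL0]mulrAC lnM ?posrE ?divr_gt0 ?subr_gt0 // lnV ?posrE //.
by field; rewrite lnC_neq0 (lt_eqF lnt_lt0) !gt_eqF.
Unshelve. all: by end_near.
Qed.

Theorem mlmc_asymptotics_holds : mlmc_asymptotics d p C TOL0 theta Cxi V0 E2 VK1.
Proof.
have [lt2p|gt2p|eq2p] := ltgtP (d%:R : R) (2 * p).
- exact: mlmc_asymptotics_lt.
- exact: mlmc_asymptotics_gt.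
- exact: mlmc_asymptotics_eq.
Qed.
End MLMCAsymptotics.

Section MeshDensities.
Variables (R : realType) (d : nat) (p : R).
Hypotheses (d_gt0 : (0 < d)%N) (p_gt0 : 0 < p).

Let dR_gt0 : 0 < d%:R :> R. Proof. by rewrite ltr0n. Qed.

Lemma qexp_gt0 : 0 < qexp d p.
Proof. by rewrite divr_gt0 // addr_gt0. Qed.

Lemma mesh_error_density (a r : R) : 0 <= a -> 0 <= r ->
  r * (a `^ (- p^-1) * r `^ (- (p + d%:R)^-1)) `^ p = a^-1 * r `^ qexp d p.
Proof.
move=> a_ge0 r_ge0; rewrite powRM ?powR_ge0 // -!powRrM.
have -> : - p^-1 * p = -1 by field; rewrite gt_eqF.
rewrite powR_inv1 // mulrCA -(mulr_powRB1 r_ge0 qexp_gt0); congr (_ * (_ * _ `^ _)).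
by rewrite /qexp; field; rewrite !gt_eqF ?addr_gt0.
Qed.

Lemma mesh_work_density (a r : R) : 0 <= a -> 0 <= r ->
  (a `^ (- p^-1) * r `^ (- (p + d%:R)^-1)) `^ (- d%:R) = a `^ (d%:R / p) * r `^ qexp d p.
Proof.
move=> a_ge0 r_ge0; rewrite powRM ?powR_ge0 // -!powRrM /qexp.
by congr (_ `^ _ * _ `^ _); field; rewrite !gt_eqF ?addr_gt0.
Qed.

Lemma K3_moments (J m v : R) : 0 < J -> 0 <= v ->
  (J `^ (d%:R / p) * m * J) * (J^-1 ^+ 2 * v) =
  m * (J `^ (qexp d p)^-1) `^ (d%:R / p) * (Num.sqrt v / J) ^+ 2.
Proof.
move=> J_gt0 v_ge0; rewrite -powRrM.
have -> : (qexp d p)^-1 * (d%:R / p) = d%:R / p + 1.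
  by rewrite /qexp; field; rewrite !gt_eqF ?addr_gt0.
rewrite powRD; last by rewrite (gt_eqF J_gt0) implybT.
rewrite powRr1 ?ltW // exprMn sqr_sqrtr //.
by field; rewrite gt_eqF.
Qed.
End MeshDensities.

Section Moments.
Local Open Scope ereal_scope.
Context {R : realType} {dT : measure_display} {T : measurableType dT}.
Variable P : probability T R.

Lemma EeZl (Y : T -> \bar R) (c : R) : (0 <= c)%R ->
  measurable_fun [set: T] Y -> (forall w, 0 <= Y w) ->
  Ee P (fun w => c%:E * Y w) = c%:E * Ee P Y.
Proof. by move=> c_ge0 mY Y_ge0; rewrite /Ee ge0_integralZl_EFin. Qed.

Lemma Vare_ge0 (Y : T -> \bar R) : 0 <= Vare P Y.
Proof. by apply: integral_ge0 => w _; exact: sqre_ge0. Qed.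

Lemma VareZl (Y : T -> \bar R) (c : R) : (0 <= c)%R ->
  measurable_fun [set: T] Y -> (forall w, 0 <= Y w) -> Ee P Y \is a fin_num ->
  Vare P (fun w => c%:E * Y w) = (c ^+ 2)%:E * Vare P Y.
Proof.
move=> c_ge0 mY Y_ge0 EY_fin; rewrite /Vare EeZl // -(fineK EY_fin).
rewrite -ge0_integralZl_EFin ?sqr_ge0 //; last 2 first.
- by move=> w _; exact: sqre_ge0.
- by apply: emeasurable_funM; apply: emeasurable_funB.
apply: eq_integral => w _.
have [->|c_neq0] := eqVneq c 0%R.
  by rewrite expr0n !mul0e subee // expe2 mule0.
have c_gt0 : (0 < c)%R by rewrite lt_neqAle eq_sym c_neq0.
move: (Y_ge0 w); case: (Y w) => [y| |] // _.
- by rewrite -!EFinM -!EFinB !expe2 -!EFinM; congr EFin; ring.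
- by rewrite gt0_muley ?lte_fin // !expe2 mulyy gt0_muley // lte_fin exprn_gt0.
Qed.

Lemma coef_var_ae_eq (Y Z : T -> \bar R) :
  measurable_fun [set: T] Y -> measurable_fun [set: T] Z -> ae_eq P setT Y Z ->
  coef_var P Y = coef_var P Z.
Proof.
move=> mY mZ YZ; have EYZ : Ee P Y = Ee P Z by exact: ae_eq_integral.
rewrite /coef_var /Vare EYZ; congr (Num.sqrt (fine _) / _)%R.
apply: ae_eq_integral => //.
- by apply: emeasurable_funM; apply: emeasurable_funB.
- by apply: emeasurable_funM; apply: emeasurable_funB.
- by apply: filterS YZ => w YZw /YZw ->.
Qed.
End Moments.

Section ProportionalFactors.
Context {R : realType} {dT : measure_display} {T : measurableType dT}.
Variables (P : probability T R) (d : nat) (p : R).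
Hypotheses (d_gt0 : (0 < d)%N) (p_gt0 : 0 < p).

Lemma K3_proportional (Y : T -> \bar R) (J m : R) : 0 < m ->
  measurable_fun [set: T] Y -> (forall w, (0 <= Y w)%E) -> Ee P Y = J%:E ->
  let E2 := fine (Ee P (fun w => ((J `^ (d%:R / p) * m)%:E * Y w)%E)) in
  let VK1 := Vare P (fun w => ((J^-1)%:E * Y w)%E) in
  (0 < VK1 < +oo)%E ->
  [/\ 0 < E2, 0 < fine VK1 &
      K3 E2 (fine VK1) = m * (J `^ (qexp d p)^-1) `^ (d%:R / p) * coef_var P Y ^+ 2].
Proof.
move=> m_gt0 mY Y_ge0 EY E2 VK1 VK1_bounds.
have J_ge0 : 0 <= J by rewrite -lee_fin -EY; exact: integral_ge0.
have VK1E : VK1 = ((J^-1 ^+ 2)%:E * Vare P Y)%E by rewrite /VK1 VareZl ?invr_ge0 // EY.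
have J_gt0 : 0 < J.
  rewrite lt_neqAle J_ge0 andbT eq_sym; apply: contraTneq VK1_bounds => J0.
  by rewrite VK1E J0 invr0 expr0n mul0e ltxx.
have VY_fin : Vare P Y \is a fin_num.
  have -> : Vare P Y = ((J ^+ 2)%:E * VK1)%E.
    by rewrite VK1E muleA -EFinM -exprMn mulfV ?gt_eqF // expr1n mul1e.
  by rewrite fin_numM // ge0_fin_numE ?(ltW (andP VK1_bounds).1) ?(andP VK1_bounds).2.
have E2E : E2 = J `^ (d%:R / p) * m * J.
  by rewrite /E2 EeZl ?mulr_ge0 ?powR_ge0 ?ltW // EY.
split.
- by rewrite E2E !mulr_gt0 ?powR_gt0.
- exact: fine_gt0.
- by rewrite /K3 E2E VK1E /coef_var EY -(fineK VY_fin) K3_moments ?fine_ge0 ?Vare_ge0 //.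
Qed.
End ProportionalFactors.

Section FubiniOnDomain.
Local Open Scope ereal_scope.
Context {R : realType} {dX : measure_display} {X : measurableType dX}
  {dT : measure_display} {T : measurableType dT}.
Variables (mu : {measure set X -> \bar R}) (mu_sigma : sigma_finite setT mu)
  (P : {sigma_finite_measure set T -> \bar R}) (D : set X) (mD : measurable D)
  (h : X -> T -> R).
Hypotheses (h_ge0 : forall x w, (0 <= h x w)%R)
  (mh : measurable_fun setT (fun z : X * T => h z.1 z.2)).

(* [mu] repackaged with its sigma-finiteness, as required by the Fubini-Tonelli lemmas. *)
Let mu' : {sigma_finite_measure set X -> \bar R} :=
  HB.pack_for (SigmaFiniteMeasure.type X R) (Measure.sort mu)
    (isSFinite.Build _ _ _ (Measure.sort mu) (sfinite_measure_sigma_finite mu_sigma))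
    (isSigmaFinite.Build _ _ _ (Measure.sort mu) mu_sigma).

Let G (z : X * T) := ((\1_D z.1 * h z.1 z.2)%R)%:E.

Let mG : measurable_fun setT G.
Proof.
apply/measurable_EFinP; apply: measurable_funM => //.
by apply: measurableT_comp => //; exact: measurable_indic.
Qed.

Let G_ge0 z : 0 <= G z. Proof. by rewrite lee_fin mulr_ge0. Qed.

Let integral_in_G w : \int[mu]_(x in D) (h x w)%:E = \int[mu']_x G (x, w).
Proof.
rewrite integral_mkcond; apply: eq_integral => x _.
by rewrite /G /patch /= indicE; case: ifP => _; rewrite ?mul1r ?mul0r.
Qed.

Lemma measurable_integral_in :
  measurable_fun [set: T] (fun w => \int[mu]_(x in D) (h x w)%:E).
Proof.
rewrite (funext integral_in_G).
exact: (@measurable_fun_fubini_tonelli_G _ _ _ _ _ mu' G mG G_ge0).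
Qed.

Lemma integral_in_fubini :
  \int[mu]_(x in D) \int[P]_w (h x w)%:E = \int[P]_w \int[mu]_(x in D) (h x w)%:E.
Proof.
rewrite (funext integral_in_G) -(fubini_tonelli G mG G_ge0) integral_mkcond /=.
apply: eq_integral => x _; rewrite /G /patch /= indicE; case: ifP => _.
  by apply: eq_integral => w _; rewrite mul1r.
by rewrite (eq_integral (fun=> 0)) ?integral0 // => w _; rewrite mul0r.
Qed.
End FubiniOnDomain.

Section FullyAdaptive.
Context {R : realType} {dX : measure_display} {X : measurableType dX}
  {dT : measure_display} {T : measurableType dT}.
Variables (mu : {measure set X -> \bar R}) (mu_sigma : sigma_finite setT mu)
  (P : probability T R) (D : set X) (mD : measurable D) (rho : X -> T -> R).
Hypotheses (mrho : measurable_fun setT (fun z : X * T => rho z.1 z.2))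
  (rho_ge0 : forall x w, 0 <= rho x w).
Variables (d : nat) (p : R).
Hypotheses (d_gt0 : (0 < d)%N) (p_gt0 : 0 < p).

Let q := qexp d p.
Let g x w := rho x w `^ q.
Let g_ge0 x w : 0 <= g x w. Proof. exact: powR_ge0. Qed.
Let mg : measurable_fun setT (fun z : X * T => g z.1 z.2).
Proof. exact: measurableT_comp (measurable_powR q) mrho. Qed.
Let Y w := (\int[mu]_(x in D) (g x w)%:E)%E.
Let Y_ge0 w : (0 <= Y w)%E.
Proof. by apply: integral_ge0 => x _; rewrite lee_fin g_ge0. Qed.
Let integral_in_scale (c : R) w : 0 <= c ->
  (\int[mu]_(x in D) (c * g x w)%:E)%E = (c%:E * Y w)%E.
Proof.
move=> c_ge0; rewrite -ge0_integralZl_EFin.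
- by apply: eq_integral => x _; rewrite EFinM.
- exact: mD.
- by move=> x _; rewrite lee_fin g_ge0.
- exact/measurable_EFinP/(measurable_funS _ _ (measurable_fun_pair1 w mg)).
- exact: c_ge0.
Qed.
Let I := (\int[mu]_(x in D) \int[P]_w (g x w)%:E)%E.
Let I_ge0 : (0 <= I)%E.
Proof. by apply: integral_ge0 => x _; apply: integral_ge0 => w _; rewrite lee_fin g_ge0. Qed.
Let J := fine I.

Let LqP_normE : LqP_norm mu D P rho q = poweR I q^-1.
Proof.
rewrite /LqP_norm; have -> // : (\int[mu]_(x in D) \int[P]_w ((`|rho x w| `^ q)%:E) = I)%E.
by apply: eq_integral => x _; apply: eq_integral => w _; rewrite (ger0_norm (rho_ge0 x w)).
Qed.

Let LqD_normE w : poweR (LqD_norm mu D rho q w) q = Y w.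
Proof.
rewrite /LqD_norm; have -> : (\int[mu]_(x in D) ((`|rho x w| `^ q)%:E) = Y w)%E.
  by apply: eq_integral => x _; rewrite (ger0_norm (rho_ge0 x w)).
rewrite -poweRrM mulVf; first exact: poweRe1 (Y_ge0 w).
exact/lt0r_neq0/qexp_gt0.
Qed.

Let f_fullE x w : f_full mu D P rho d p x w = J `^ (- p^-1) * rho x w `^ (- (p + d%:R)^-1).
Proof. by []. Qed.

Let K1E : K1 mu D rho (f_full mu D P rho d p) p = fun w => ((J^-1)%:E * Y w)%E.
Proof.
apply/funext => w; rewrite -integral_in_scale; last by rewrite invr_ge0 fine_ge0.
by apply: eq_integral => x _; rewrite f_fullE mesh_error_density ?fine_ge0 ?rho_ge0.
Qed.

Let K2E : K2 mu D (f_full mu D P rho d p) d = fun w => ((J `^ (d%:R / p) * 1)%:E * Y w)%E.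
Proof.
apply/funext => w; rewrite mulr1 -integral_in_scale; last exact: powR_ge0.
by apply: eq_integral => x _; rewrite f_fullE mesh_work_density ?fine_ge0 ?rho_ge0.
Qed.

Lemma fully_adaptive_constants :
  (LqP_norm mu D P rho (qexp d p) < +oo)%E ->
  let f := f_full mu D P rho d p in
  let E2 := fine (Ee P (K2 mu D f d)) in
  let VK1 := Vare P (K1 mu D rho f p) in
  (0 < VK1 < +oo)%E ->
  [/\ 0 < E2, 0 < fine VK1 &
      K3 E2 (fine VK1) = fine (LqP_norm mu D P rho (qexp d p)) `^ (d%:R / p)
        * coef_var P (fun w => poweR (LqD_norm mu D rho (qexp d p) w) (qexp d p)) ^+ 2].
Proof.
move=> LqP_fin f E2 VK1 VK1_bounds.
have I_fin : I \is a fin_num.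
  rewrite (ge0_fin_numE I_ge0); apply: (@lty_poweRy _ _ q^-1); last by rewrite -LqP_normE.
  by rewrite invr_eq0 gt_eqF ?qexp_gt0.
have EY : Ee P Y = J%:E.
  by rewrite /Ee -(integral_in_fubini mu_sigma P mD g_ge0 mg) /J fineK.
have := K3_proportional d_gt0 p_gt0 ltr01 (measurable_integral_in mu_sigma mD g_ge0 mg) Y_ge0 EY.
rewrite -K1E -K2E -/E2 -/VK1 => /(_ VK1_bounds)[E2_gt0 VK1_gt0 K3E].
split; [exact: E2_gt0 | exact: VK1_gt0 |].
by rewrite K3E mul1r LqP_normE -(fineK I_fin) poweR_EFin (funext LqD_normE).
Qed.
End FullyAdaptive.

Section UniformAdaptive.
Context {R : realType} {dX : measure_display} {X : measurableType dX}
  {dT : measure_display} {T : measurableType dT}.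
Variables (mu : {measure set X -> \bar R}) (mu_sigma : sigma_finite setT mu)
  (P : probability T R) (D : set X) (mD : measurable D) (rho : X -> T -> R).
Hypotheses (muD_bounds : (0 < mu D < +oo)%E)
  (mrho : measurable_fun setT (fun z : X * T => rho z.1 z.2))
  (rho_ge0 : forall x w, 0 <= rho x w).
Variables (d : nat) (p : R).
Hypotheses (d_gt0 : (0 < d)%N) (p_gt0 : 0 < p).

Let q := qexp d p.
Let B w := (\int[mu]_(x in D) (rho x w)%:E)%E.
Let B_ge0 w : (0 <= B w)%E.
Proof. by apply: integral_ge0 => x _; rewrite lee_fin rho_ge0. Qed.
Let mB : measurable_fun [set: T] B := measurable_integral_in mu_sigma mD rho_ge0 mrho.
Let Z w := poweR (B w) q.
Let mZ : measurable_fun [set: T] Z.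
Proof. exact: measurableT_comp (measurable_poweR q) mB. Qed.
Let Y w := ((fine (B w)) `^ q)%:E.
Let mY : measurable_fun [set: T] Y.
Proof.
apply/measurable_EFinP; apply: measurableT_comp (measurable_powR q) _.
exact: measurableT_comp (fine_measurable measurableT) mB.
Qed.

Let L1D_normE : L1D_norm mu D rho = B.
Proof.
by apply/funext => w; apply: eq_integral => x _; rewrite (ger0_norm (rho_ge0 x w)).
Qed.

Let LqO_normE : LqO_norm P (L1D_norm mu D rho) q = poweR (\int[P]_w Z w)%E q^-1.
Proof.
rewrite /LqO_norm L1D_normE; have -> // : (\int[P]_w poweR `|B w| q = \int[P]_w Z w)%E.
by apply: eq_integral => w _; rewrite (gee0_abs (B_ge0 w)).
Qed.

Let EZ_ge0 : (0 <= \int[P]_w Z w)%E.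
Proof. by apply: integral_ge0 => w _; exact: poweR_ge0. Qed.
Let J := fine (\int[P]_w Z w)%E.

Let f_unifE x w : f_unif mu D P rho d p x w = J `^ (- p^-1) * fine (B w) `^ (- (p + d%:R)^-1).
Proof. by rewrite powRN mulrC. Qed.

Let K1E : K1 mu D rho (f_unif mu D P rho d p) p = fun w => ((J^-1)%:E * Y w)%E.
Proof.
apply/funext => w; rewrite /K1.
under eq_integral => x _ do rewrite f_unifE EFinM muleC.
rewrite ge0_integralZl_EFin.
- rewrite -/(B w) /Y; move: (B_ge0 w); case: (B w) => [b| |] //= b_ge0.
    by rewrite -EFinM mulrC mesh_error_density ?fine_ge0.
  (* [fine +oo = 0] and [0 `^ e = 0] for [e != 0], so both sides vanish. *)
  rewrite [0 `^ _]powR0 ?oppr_eq0 ?invr_eq0 ?gt_eqF ?addr_gt0 ?ltr0n //.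
  by rewrite mulr0 powR0 ?gt_eqF // mul0e powR0 ?gt_eqF ?qexp_gt0 // mule0.
- exact: mD.
- by move=> x _; rewrite lee_fin rho_ge0.
- exact/measurable_EFinP/(measurable_funS _ _ (measurable_fun_pair1 w mrho)).
- exact: powR_ge0.
Qed.

Let K2E : K2 mu D (f_unif mu D P rho d p) d =
  fun w => ((J `^ (d%:R / p) * fine (mu D))%:E * Y w)%E.
Proof.
apply/funext => w; rewrite /K2.
under eq_integral => x _ do rewrite f_unifE.
rewrite integral_cst // mesh_work_density ?fine_ge0 //.
rewrite -[mu D](@fineK _ (mu D)) ?ge0_fin_numE ?(andP muD_bounds).2 //.
by rewrite -!EFinM; congr EFin; ring.
Qed.

Let Y_ae_eq_Z : (\int[P]_w Z w)%E \is a fin_num -> ae_eq P setT Y Z.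
Proof.
move=> EZ_fin; have Zint : P.-integrable setT Z.
  apply/integrableP; split; first exact: mZ.
  rewrite (eq_integral Z); last by move=> w _; rewrite gee0_abs ?poweR_ge0.
  by rewrite -(fineK EZ_fin) ltry.
apply: filterS (integrable_ae measurableT Zint) => w Zw_fin _.
move: (Zw_fin I) (B_ge0 w); rewrite /Y /Z; case: (B w) => [b| |] //=.
by rewrite gt_eqF ?qexp_gt0.
Qed.

Lemma uniform_adaptive_constants :
  (LqO_norm P (L1D_norm mu D rho) (qexp d p) < +oo)%E ->
  let f := f_unif mu D P rho d p in
  let E2 := fine (Ee P (K2 mu D f d)) in
  let VK1 := Vare P (K1 mu D rho f p) in
  (0 < VK1 < +oo)%E ->
  [/\ 0 < E2, 0 < fine VK1 &
      K3 E2 (fine VK1) =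
        fine (mu D) * fine (LqO_norm P (L1D_norm mu D rho) (qexp d p)) `^ (d%:R / p)
        * coef_var P (fun w => poweR (L1D_norm mu D rho w) (qexp d p)) ^+ 2].
Proof.
move=> LqO_fin f E2 VK1 VK1_bounds.
have EZ_fin : (\int[P]_w Z w)%E \is a fin_num.
  rewrite (ge0_fin_numE EZ_ge0); apply: (@lty_poweRy _ _ q^-1); last by rewrite -LqO_normE.
  by rewrite invr_eq0 gt_eqF ?qexp_gt0.
have YZ := Y_ae_eq_Z EZ_fin.
have EY : Ee P Y = J%:E.
  by rewrite /Ee (ae_eq_integral _ _ measurableT mY mZ YZ) fineK.
have Y_ge0 w : (0 <= Y w)%E by rewrite lee_fin powR_ge0.
have := K3_proportional d_gt0 p_gt0 (fine_gt0 muD_bounds) mY Y_ge0 EY.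
rewrite -K1E -K2E -/E2 -/VK1 => /(_ VK1_bounds)[E2_gt0 VK1_gt0 K3E].
split; [exact: E2_gt0 | exact: VK1_gt0 |].
by rewrite K3E LqO_normE -(fineK EZ_fin) poweR_EFin L1D_normE (coef_var_ae_eq mY mZ YZ).
Qed.
End UniformAdaptive.

Theorem corollary3p1 (R : realType)
  (dX : measure_display) (X : measurableType dX) (mu : {measure set X -> \bar R})
  (D : set X)
  (dT : measure_display) (T : measurableType dT) (P : probability T R)
  (rho : X -> T -> R) (d : nat) (p C TOL0 theta Cxi V0 : R) :
  measurable D -> (0 < mu D < +oo)%E -> sigma_finite setT mu ->
  measurable_fun setT (fun z : X * T => rho z.1 z.2) ->
  (forall x w, 0 <= rho x w) ->
  (0 < d)%N -> 0 < p -> 0 < C < 1 -> 0 < TOL0 -> 0 < theta < 1 -> 0 < Cxi ->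
  0 < V0 ->
  (* case (i): fully adaptive meshes *)
  ((LqP_norm mu D P rho (qexp d p) < +oo)%E ->
   let f := f_full mu D P rho d p in
   let E2 := fine (Ee P (K2 mu D f d)) in
   let VK1 := Vare P (K1 mu D rho f p) in
   (0 < VK1 < +oo)%E ->
   mlmc_asymptotics d p C TOL0 theta Cxi V0 E2 (fine VK1)
   /\ K3 E2 (fine VK1) =
      fine (LqP_norm mu D P rho (qexp d p)) `^ (d%:R / p)
      * coef_var P (fun w => poweR (LqD_norm mu D rho (qexp d p) w) (qexp d p)) ^+ 2)
  /\
  (* case (ii): adaptive selection of uniform meshes *)
  ((LqO_norm P (L1D_norm mu D rho) (qexp d p) < +oo)%E ->
   let f := f_unif mu D P rho d p in
   let E2 := fine (Ee P (K2 mu D f d)) in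
   let VK1 := Vare P (K1 mu D rho f p) in
   (0 < VK1 < +oo)%E ->
   mlmc_asymptotics d p C TOL0 theta Cxi V0 E2 (fine VK1)
   /\ K3 E2 (fine VK1) =
      fine (mu D)
      * fine (LqO_norm P (L1D_norm mu D rho) (qexp d p)) `^ (d%:R / p)
      * coef_var P (fun w => poweR (L1D_norm mu D rho w) (qexp d p)) ^+ 2).
Proof.
move=> mD muD_bounds mu_sigma mrho rho_ge0 d_gt0 p_gt0 /andP[C_gt0 C_lt1] TOL0_gt0
  /andP[theta_gt0 theta_lt1] Cxi_gt0 V0_gt0.
split=> [LqP_fin f E2 VK1 VK1_bounds | LqO_fin f E2 VK1 VK1_bounds].
- have [E2_gt0 VK1_gt0 K3E] :=
    fully_adaptive_constants mu_sigma mD mrho rho_ge0 d_gt0 p_gt0 LqP_fin VK1_bounds.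
  by split; [exact: mlmc_asymptotics_holds | exact: K3E].
- have [E2_gt0 VK1_gt0 K3E] :=
    uniform_adaptive_constants mu_sigma mD muD_bounds mrho rho_ge0 d_gt0 p_gt0 LqO_fin VK1_bounds.
  by split; [exact: mlmc_asymptotics_holds | exact: K3E].
Qed.
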